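(* Let $G$ be a countable discrete amenable group, $\Lambda$ a strongly connected finite $k$-graph, and $(G,\Lambda)$ a pseudo free and locally faithful self-similar action satisfying the finite-state condition, with $x_\Lambda(g\cdot v)=x_\Lambda(v)$ for all $v\in\Lambda^0$, $g\in G$. Then $\mathrm{Per}_{G,\Lambda}$ is a subgroup of $\{n\in\mathbb{Z}^k:\rho(\Lambda)^n=1\}$; in particular $\rho(\Lambda)^{d(\mu)}=\rho(\Lambda)^{d(\nu)}$ for every cycline triple $(\mu,g,\nu)$.
   Context: Let $k\ge1$. A $k$-graph is a countable small category $\Lambda$ together with a functor $d:\Lambda\to\mathbb{N}^k$ (the degree map) with the unique factorization property: for every $\mu\in\Lambda$ and $m,n\in\mathbb{N}^k$ with $d(\mu)=m+n$ there are unique $\alpha,\beta\in\Lambda$ with $d(\alpha)=m$, $d(\beta)=n$ and $\mu=\alpha\beta$. Write $\Lambda^n=d^{-1}(n)$; $\Lambda^0$ is identified with the set of objects (vertices), and $r,s$ denote range and source. For $v,w\in\Lambda^0$ and $n\in\mathbb{N}^k$ write $v\Lambda=r^{-1}(v)$, $v\Lambda w=r^{-1}(v)\cap s^{-1}(w)$, $v\Lambda^n=v\Lambda\cap\Lambda^n$, etc. All $k$-graphs are assumed row-finite ($|v\Lambda^n|<\infty$) and source-free ($v\Lambda^n\neq\emptyset$) for all $v,n$. $\Lambda$ is finite if $|\Lambda^n|<\infty$ for all $n$, and strongly connected if $v\Lambda w\neq\emptyset$ for all $v,w\in\Lambda^0$. $e_1,\dots,e_k$ is the standard basis of $\mathbb{N}^k$.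 Infinite paths: let $\Omega_k=\{(p,q)\in\mathbb{N}^k\times\mathbb{N}^k:p\le q\}$ with $r(p,q)=(p,p)$, $s(p,q)=(q,q)$, $(p,q)(q,m)=(p,m)$, $d(p,q)=q-p$. An infinite path is a degree-preserving functor $x:\Omega_k\to\Lambda$; $\Lambda^\infty$ is the set of infinite paths, $v\Lambda^\infty=\{x:x(0,0)=v\}$, the shift is $\sigma^n(x)(p,q)=x(p+n,q+n)$, and for $\mu\in\Lambda$, $x\in s(\mu)\Lambda^\infty$, $\mu x$ is the unique infinite path $y$ with $y(0,d(\mu))=\mu$ and $\sigma^{d(\mu)}(y)=x$. Self-similar actions: $G$ is a countable discrete group. A self-similar action $(G,\Lambda)$ consists of an action of $G$ on $\Lambda$ by automorphisms (bijections preserving $d$, $r$, $s$), written $g\cdot\mu$, and a restriction map $G\times\Lambda\to G$, $(g,\mu)\mapsto g|_\mu$, such that for all $g,h\in G$, $v\in\Lambda^0$ and $\mu,\nu$ with $s(\mu)=r(\nu)$: $g\cdot(\mu\nu)=(g\cdot\mu)(g|_\mu\cdot\nu)$; $g|_v=g$; $g|_{\mu\nu}=(g|_\mu)|_\nu$; $1_G|_\mu=1_G$; $(gh)|_\mu=g|_{h\cdot\mu}\,h|_\mu$. For $x\in\Lambda^\infty$, $(g\cdot x)(p,q)=g|_{x(0,p)}\cdot x(p,q)$. The action is pseudo free if $g\cdot\mu=\mu$ and $g|_\mu=1_G$ for some $\mu\in\Lambda$ imply $g=1_G$; locally faithful if, whenever $g\in G$, $v\in\Lambda^0$ and $g\cdot\mu=\mu$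 for all $\mu\in v\Lambda$, then $g=1_G$; it satisfies the finite-state condition if $\{g|_\mu:\mu\in\Lambda\}$ is finite for each $g\in G$. Cycline triples and periodicity: a triple $(\mu,g,\nu)\in\Lambda\times G\times\Lambda$ with $s(\mu)=g\cdot s(\nu)$ is cycline if $\mu(g\cdot x)=\nu x$ for all $x\in s(\nu)\Lambda^\infty$; $\mathcal{C}_{G,\Lambda}$ is the set of cycline triples. $\mathrm{Per}_{G,\Lambda}=\{d(\mu)-d(\nu):(\mu,g,\nu)\in\mathcal{C}_{G,\Lambda}\}\subseteq\mathbb{Z}^k$. Perron–Frobenius data: for a strongly connected finite $k$-graph let $T_{e_i}(v,w)=|v\Lambda^{e_i}w|$, $\rho(\Lambda)=(\rho(T_{e_1}),\dots,\rho(T_{e_k}))$ (spectral radii, all positive), $\rho(\Lambda)^n=\prod_i\rho(T_{e_i})^{n_i}$ for $n\in\mathbb{Z}^k$. The Perron–Frobenius eigenvector $x_\Lambda$ is the unique vector in $(0,\infty)^{\Lambda^0}$ with $\sum_v x_\Lambda(v)=1$ and $T_{e_i}x_\Lambda=\rho(T_{e_i})x_\Lambda$ for all $i$. *)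

From HB Require Import structures.
From mathcomp Require Import all_boot all_order all_algebra all_field.
Set Implicit Arguments. Unset Strict Implicit. Unset Printing Implicit Defensive.
Import Order.TTheory GRing.Theory Num.Theory.

Definition deg_t (k : nat) := {ffun 'I_k -> nat}.
Definition zdeg_t (k : nat) := {ffun 'I_k -> int}.
Definition dzero (k : nat) : deg_t k := [ffun => 0%N].
Definition dadd (k : nat) (m n : deg_t k) : deg_t k := [ffun i => (m i + n i)%N].
Definition dsub (k : nat) (m n : deg_t k) : deg_t k := [ffun i => (m i - n i)%N].
Definition dle (k : nat) (m n : deg_t k) : bool := [forall i, (m i <= n i)%N].
Definition dbasis (k : nat) (i : 'I_k) : deg_t k := [ffun j => nat_of_bool (j == i)].
Definition zzero (k : nat) : zdeg_t k := [ffun => 0%R].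
Definition zsub (k : nat) (a b : zdeg_t k) : zdeg_t k := [ffun i => (a i - b i)%R].

(* A small category given by its objects (vertices), morphisms (paths), range,
   source, degree, identities and a total composition function (only meaningful
   on composable pairs). *)
Record kgraph (k : nat) := KGraph {
  kvert : finType;
  kpath : countType;
  krng : kpath -> kvert;
  ksrc : kpath -> kvert;
  kdeg : kpath -> deg_t k;
  kid : kvert -> kpath;
  kcomp : kpath -> kpath -> kpath }.

Arguments krng {k L} _ : rename.
Arguments ksrc {k L} _ : rename.
Arguments kdeg {k L} _ : rename.
Arguments kid {k L} _ : rename.
Arguments kcomp {k L} _ _ : rename.

Definition is_kgraph (k : nat) (L : kgraph k) : Prop :=
  (forall v : kvert L, krng (kid v) = v /\ ksrc (kid v) = v /\ kdeg (kid v) = dzero k) /\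
  (forall mu nu : kpath L, ksrc mu = krng nu ->
      krng (kcomp mu nu) = krng mu /\ ksrc (kcomp mu nu) = ksrc nu /\
      kdeg (kcomp mu nu) = dadd (kdeg mu) (kdeg nu)) /\
  (forall mu : kpath L, kcomp (kid (krng mu)) mu = mu /\ kcomp mu (kid (ksrc mu)) = mu) /\
  (forall mu nu eta : kpath L, ksrc mu = krng nu -> ksrc nu = krng eta ->
      kcomp (kcomp mu nu) eta = kcomp mu (kcomp nu eta)) /\
  (forall (mu : kpath L) (m n : deg_t k), kdeg mu = dadd m n ->
      exists alpha beta : kpath L,
        (kdeg alpha = m /\ kdeg beta = n /\ ksrc alpha = krng beta /\ mu = kcomp alpha beta) /\
        (forall alpha' beta' : kpath L,
           kdeg alpha' = m -> kdeg beta' = n -> ksrc alpha' = krng beta' ->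
           mu = kcomp alpha' beta' -> alpha' = alpha /\ beta' = beta)).

Definition kg_row_finite (k : nat) (L : kgraph k) : Prop :=
  forall (v : kvert L) (n : deg_t k), exists s : seq (kpath L),
    forall mu, krng mu = v -> kdeg mu = n -> mu \in s.

Definition kg_source_free (k : nat) (L : kgraph k) : Prop :=
  forall (v : kvert L) (n : deg_t k), exists mu : kpath L, krng mu = v /\ kdeg mu = n.

Definition kg_finite (k : nat) (L : kgraph k) : Prop :=
  forall n : deg_t k, exists s : seq (kpath L), forall mu, kdeg mu = n -> mu \in s.

Definition kg_strongly_connected (k : nat) (L : kgraph k) : Prop :=
  forall v w : kvert L, exists mu : kpath L, krng mu = v /\ ksrc mu = w.

Record cgroup := CGroup {
  gcar : countType;
  gmul : gcar -> gcar -> gcar;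
  gone : gcar;
  ginv : gcar -> gcar }.
Arguments gmul {G} _ _ : rename.
Arguments ginv {G} _ : rename.

Definition is_group (G : cgroup) : Prop :=
  (forall a b c : gcar G, gmul a (gmul b c) = gmul (gmul a b) c) /\
  (forall a : gcar G, gmul (gone G) a = a) /\
  (forall a : gcar G, gmul (ginv a) a = gone G).

(* Amenability of a countable discrete group, via the Folner condition:
   for every finite F and eps = 1/n there is a finite nonempty A with
   |gA (symmetric difference) A| < |A|/n for all g in F. *)
Definition folner_amenable (G : cgroup) : Prop :=
  forall (F : seq (gcar G)) (n : nat), (0 < n)%N ->
    exists A : seq (gcar G),
      uniq A /\ (0 < size A)%N /\
      forall g, g \in F ->
        (n * (count (fun a => gmul g a \notin A) A
              + count (fun b => gmul (ginv g) b \notin A) A) < size A)%N.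

Section SS.
Variables (G : cgroup) (k : nat) (L : kgraph k).
Variables (act : gcar G -> kpath L -> kpath L) (res : gcar G -> kpath L -> gcar G).

Definition vact (g : gcar G) (v : kvert L) : kvert L := krng (act g (kid v)).

Definition is_selfsimilar : Prop :=
  (forall mu, act (gone G) mu = mu) /\
  (forall g h mu, act (gmul g h) mu = act g (act h mu)) /\
  (forall g mu, kdeg (act g mu) = kdeg mu /\ krng (act g mu) = vact g (krng mu) /\
                ksrc (act g mu) = vact g (ksrc mu)) /\
  (forall g mu nu, ksrc mu = krng nu ->
      act g (kcomp mu nu) = kcomp (act g mu) (act (res g mu) nu)) /\
  (forall g v, res g (kid v) = g) /\
  (forall g mu nu, ksrc mu = krng nu -> res g (kcomp mu nu) = res (res g mu) nu) /\
  (forall mu, res (gone G) mu = gone G) /\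
  (forall g h mu, res (gmul g h) mu = gmul (res g (act h mu)) (res h mu)).

Definition pseudo_free : Prop :=
  forall g mu, act g mu = mu -> res g mu = gone G -> g = gone G.

Definition locally_faithful : Prop :=
  forall g (v : kvert L), (forall mu, krng mu = v -> act g mu = mu) -> g = gone G.

Definition finite_state : Prop :=
  forall g, exists s : seq (gcar G), forall mu, res g mu \in s.

(* infinite paths: degree-preserving functors Omega_k -> Lambda, given by their
   values x p q on pairs p <= q *)
Definition is_ipath (x : deg_t k -> deg_t k -> kpath L) : Prop :=
  (forall p q, dle p q -> kdeg (x p q) = dsub q p) /\
  (forall p, x p p = kid (krng (x p p))) /\
  (forall p q m, dle p q -> dle q m ->
      ksrc (x p q) = krng (x q m) /\ kcomp (x p q) (x q m) = x p m).

Definition iact (g : gcar G) (x : deg_t k -> deg_t k -> kpath L) :=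
  fun p q => act (res g (x (dzero k) p)) (x p q).

(* y = mu x : y(0, d mu) = mu and sigma^{d mu}(y) = x *)
Definition is_concat (mu : kpath L) (x y : deg_t k -> deg_t k -> kpath L) : Prop :=
  is_ipath y /\ y (dzero k) (kdeg mu) = mu /\
  (forall p q, dle p q -> y (dadd p (kdeg mu)) (dadd q (kdeg mu)) = x p q).

Definition cycline (mu : kpath L) (g : gcar G) (nu : kpath L) : Prop :=
  ksrc mu = vact g (ksrc nu) /\
  forall x, is_ipath x -> x (dzero k) (dzero k) = kid (ksrc nu) ->
    exists y, is_concat mu (iact g x) y /\ is_concat nu x y.

Definition in_Per (n : zdeg_t k) : Prop :=
  exists mu g nu, cycline mu g nu /\
    n = [ffun i => ((kdeg mu i)%:Z - (kdeg nu i)%:Z)%R].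
End SS.

Definition adj_count (k : nat) (L : kgraph k) (T : 'I_k -> kvert L -> kvert L -> nat) : Prop :=
  forall i v w, exists s : seq (kpath L),
    uniq s /\ size s = T i v w /\
    forall mu, (mu \in s) = [&& kdeg mu == dbasis i, krng mu == v & ksrc mu == w].

Definition adjmx (V : finType) (t : V -> V -> nat) : 'M[algC]_#|V| :=
  (\matrix_(a, b) ((t (enum_val a) (enum_val b))%:R : algC))%R.

Definition is_specrad (n : nat) (A : 'M[algC]_n) (r : algC) : Prop :=
  (exists2 l, eigenvalue A l & (`|l| = r)%R) /\
  (forall l, eigenvalue A l -> (`|l| <= r)%R).

Definition is_PF (k : nat) (L : kgraph k) (T : 'I_k -> kvert L -> kvert L -> nat)
    (rho : 'I_k -> algC) (x : kvert L -> algC) : Prop :=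
  (forall v, (0 < x v)%R) /\ (\sum_v x v = 1)%R /\
  (forall i v, (\sum_w (T i v w)%:R * x w = rho i * x v)%R).

Definition rho_pow (k : nat) (rho : 'I_k -> algC) (n : zdeg_t k) : algC :=
  (\prod_(i < k) (rho i) ^ (n i))%R.

(* The group part is the calculus of cycline triples:
   (v, 1, v) is cycline; if (mu, g, nu) is cycline so is (nu, g^-1, mu);
   cycline triples compose, (mu, g, nu) (nu, h, eta) |-> (mu, gh, eta); and
   they can be prolonged by paths on the left, (al mu, g, al nu), and on the
   right, (mu (g.lam), g|_lam, nu lam).  Strong connectivity links two
   cycline triples through such prolongations, which yields a triple whose
   degree difference is the difference of the two given ones.  Cyclinity is
   tested on infinite paths; since Lambda is source-free, every finite path
   is the initial segment of one, which is what the arguments rely on.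
   The eigenvalue part is a counting argument: the weight
   W(v, a) = sum_{mu in v Lambda^a} x(s(mu)) equals rho^a x(v) (induction on
   a, using T_{e_i} x = rho_i x and unique factorisation), and for a cycline
   triple (mu, g, nu) the map al |-> beta with nu al = mu beta is a bijection
   s(nu) Lambda^{d(mu)} -> s(mu) Lambda^{d(nu)}, so W(s nu, d mu) =
   W(s mu, d nu).  With s(mu) = g.s(nu) and G-invariance of x this gives
   rho^{d mu} = rho^{d nu}. *)
From HB Require Import structures.
From mathcomp Require Import all_boot all_order all_algebra all_field.
From mathcomp Require Import zify.
From Stdlib Require Import ClassicalEpsilon.
Set Implicit Arguments. Unset Strict Implicit. Unset Printing Implicit Defensive.
Import Order.TTheory GRing.Theory Num.Theory.

(* Degrees are finite functions; [lia] does not see through the dependent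
   application [a i], so the coordinates are generalised first. *)
Ltac deg_coords := repeat match goal with
  | |- context [@fun_of_fin ?a ?b ?f ?i] =>
      let x := fresh "x" in set x := @fun_of_fin a b f i; clearbody x end.
Ltac deg_ext := apply/ffunP => ?; rewrite ?ffunE; deg_coords; lia.

Section Degrees.
Variable k : nat.
Implicit Types a b c p q : deg_t k.
Local Notation d0 := (dzero k).

Lemma daddC a b : dadd a b = dadd b a. Proof. deg_ext. Qed.
Lemma dadd0 a : dadd a d0 = a. Proof. deg_ext. Qed.
Lemma dadd0l a : dadd d0 a = a. Proof. deg_ext. Qed.
Lemma dsubK a b : dsub (dadd a b) a = b. Proof. deg_ext. Qed.
Lemma dsub0 a : dsub a d0 = a. Proof. deg_ext. Qed.
Lemma dsub_add2r a b c : dsub (dadd b c) (dadd a c) = dsub b a. Proof. deg_ext. Qed.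
Lemma dadd_shift p a b : dadd p (dadd a b) = dadd (dadd p b) a. Proof. deg_ext. Qed.

Lemma dleP a b : reflect (forall i, a i <= b i) (dle a b). Proof. exact: forallP. Qed.
Lemma dle_refl a : dle a a. Proof. by apply/dleP. Qed.
Lemma dle0 a : dle d0 a. Proof. by apply/dleP => i; rewrite ffunE. Qed.
Lemma dle_trans a b c : dle a b -> dle b c -> dle a c.
Proof. by move=> /dleP Hab /dleP Hbc; apply/dleP => i; apply: leq_trans (Hab i) (Hbc i). Qed.
Lemma dle_addr a b : dle a (dadd a b).
Proof. by apply/dleP => i; rewrite ffunE leq_addr. Qed.
Lemma dle_addl a b : dle b (dadd a b).
Proof. by apply/dleP => i; rewrite ffunE leq_addl. Qed.
Lemma dle_add2r a b c : dle a b -> dle (dadd a c) (dadd b c).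
Proof. by move=> /dleP H; apply/dleP => i; rewrite !ffunE leq_add2r. Qed.
Lemma dsubKC a b : dle a b -> dadd a (dsub b a) = b.
Proof. by move=> /dleP H; apply/ffunP => i; rewrite !ffunE subnKC. Qed.

Definition dconst (j : nat) : deg_t k := [ffun => j].
Definition dsize a : nat := \sum_(i < k) a i.

Lemma dconst_le j j' : j <= j' -> dle (dconst j) (dconst j').
Proof. by move=> H; apply/dleP => i; rewrite !ffunE. Qed.
Lemma dle_dconst_size a : dle a (dconst (dsize a)).
Proof. by apply/dleP => i; rewrite ffunE /dsize (bigD1 i) //= leq_addr. Qed.
Lemma dsize_le a b : dle a b -> dsize a <= dsize b.
Proof. by move/dleP => H; apply: leq_sum => i _; apply: H. Qed.
Lemma dsize_add a b : dsize (dadd a b) = dsize a + dsize b.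
Proof. by rewrite /dsize -big_split; apply: eq_bigr => i _; rewrite ffunE. Qed.
Lemma dsize_basis i : dsize (dbasis i) = 1.
Proof. by rewrite /dsize (bigD1 i) //= ffunE eqxx big1 // => j /negbTE; rewrite ffunE => ->. Qed.

Lemma dsize0 a : dsize a = 0 -> a = d0.
Proof.
move=> Ha; apply/ffunP => i; rewrite ffunE.
by apply/eqP; rewrite -leqn0 -Ha /dsize (bigD1 i) //= leq_addr.
Qed.
Lemma dpeel a : 0 < dsize a -> exists i a', a = dadd a' (dbasis i).
Proof.
move=> Ha; have [i Hi | Hz] := pickP (fun i => 0 < a i); last first.
  by move: Ha; rewrite /dsize big1 // => i _; apply/eqP; rewrite -leqn0 leqNgt Hz.
exists i, (dsub a (dbasis i)); apply/ffunP => j; rewrite !ffunE.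
by case: (j =P i) => [->|_] /=; move: Hi; deg_coords; lia.
Qed.
End Degrees.

Section Factorisation.
Variables (k : nat) (L : kgraph k).
Hypothesis HL : is_kgraph L.
Implicit Types mu nu a b : kpath L.
Local Notation d0 := (dzero k).

Lemma id_rng v : krng (kid v : kpath L) = v. Proof. by case: HL => [H _]; case: (H v). Qed.
Lemma id_src v : ksrc (kid v : kpath L) = v. Proof. by case: HL => [H _]; case: (H v) => _ []. Qed.
Lemma id_deg v : kdeg (kid v : kpath L) = d0. Proof. by case: HL => [H _]; case: (H v) => _ []. Qed.
Lemma comp_rng mu nu : ksrc mu = krng nu -> krng (kcomp mu nu) = krng mu.
Proof. by case: HL => _ [H _] E; case: (H _ _ E). Qed.
Lemma comp_src mu nu : ksrc mu = krng nu -> ksrc (kcomp mu nu) = ksrc nu.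
Proof. by case: HL => _ [H _] E; case: (H _ _ E) => _ []. Qed.
Lemma comp_deg mu nu : ksrc mu = krng nu -> kdeg (kcomp mu nu) = dadd (kdeg mu) (kdeg nu).
Proof. by case: HL => _ [H _] E; case: (H _ _ E) => _ []. Qed.
Lemma comp_idl mu : kcomp (kid (krng mu)) mu = mu.
Proof. by case: HL => _ [_ [H _]]; case: (H mu). Qed.
Lemma comp_idr mu : kcomp mu (kid (ksrc mu)) = mu.
Proof. by case: HL => _ [_ [H _]]; case: (H mu). Qed.
Lemma comp_assoc mu nu eta : ksrc mu = krng nu -> ksrc nu = krng eta ->
  kcomp (kcomp mu nu) eta = kcomp mu (kcomp nu eta).
Proof. by case: HL => _ [_ [_ [H _]]]; apply: H. Qed.

Lemma factor_uniq a b a' b' : ksrc a = krng b -> ksrc a' = krng b' ->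
  kdeg a = kdeg a' -> kdeg b = kdeg b' -> kcomp a b = kcomp a' b' -> a = a' /\ b = b'.
Proof.
move=> E E' Da Db C; case: HL => _ [_ [_ [_ H]]].
have [al [be [_ U]]] := H _ _ _ (comp_deg E).
have [-> ->] := U a b erefl erefl E erefl.
by have [-> ->] := U a' b' (esym Da) (esym Db) E' C.
Qed.

Lemma deg0_kid mu : kdeg mu = d0 -> mu = kid (krng mu).
Proof.
move=> D; have := @factor_uniq (kid (krng mu)) mu mu (kid (ksrc mu)).
rewrite comp_idl comp_idr id_src id_rng !id_deg D => U.
by case: (U erefl erefl erefl erefl erefl).
Qed.

(* [head mu m] and [tail mu m] are the segments mu(0, m) and mu(m, d(mu)),
   chosen by the existence half of unique factorisation (for m <= d(mu)). *)
Definition is_factor mu (m : deg_t k) (ab : kpath L * kpath L) : Prop :=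
  [/\ kdeg ab.1 = m, ksrc ab.1 = krng ab.2, mu = kcomp ab.1 ab.2
    & kdeg ab.2 = dsub (kdeg mu) m].
Definition factor mu (m : deg_t k) : kpath L * kpath L :=
  epsilon (inhabits (mu, mu)) (is_factor mu m).
Definition head mu m := (factor mu m).1.
Definition tail mu m := (factor mu m).2.

Lemma factorP mu m : dle m (kdeg mu) -> is_factor mu m (head mu m, tail mu m).
Proof.
move=> Hm; suff: is_factor mu m (factor mu m) by rewrite /head /tail; case: factor.
apply: epsilon_spec; case: HL => _ [_ [_ [_ H]]].
have [al [be [[? [? [? ?]]] _]]] := H mu m (dsub (kdeg mu) m) (esym (dsubKC Hm)).
by exists (al, be); split.
Qed.

Lemma factor_comp a b : ksrc a = krng b ->
  head (kcomp a b) (kdeg a) = a /\ tail (kcomp a b) (kdeg a) = b.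
Proof.
move=> E; have Dm := comp_deg E.
have Hle : dle (kdeg a) (kdeg (kcomp a b)) by rewrite Dm dle_addr.
have [/= D1 E1 C1 D2] := factorP Hle.
rewrite Dm dsubK in D2.
by have [-> ->] := factor_uniq E1 E D1 D2 (esym C1).
Qed.

Lemma head_full mu : head mu (kdeg mu) = mu /\ tail mu (kdeg mu) = kid (ksrc mu).
Proof. by have := @factor_comp mu (kid (ksrc mu)); rewrite id_rng comp_idr; apply. Qed.

Lemma factor0 mu : head mu d0 = kid (krng mu) /\ tail mu d0 = mu.
Proof. by have := @factor_comp (kid (krng mu)) mu; rewrite id_src comp_idl id_deg; apply. Qed.

Lemma factor_assoc mu p q : dle p q -> dle q (kdeg mu) -> [/\
  head (head mu q) p = head mu p,
  tail mu p = kcomp (tail (head mu q) p) (tail mu q) &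
  ksrc (tail (head mu q) p) = krng (tail mu q)].
Proof.
move=> Hpq Hq; have [/= DA EA CA DB] := factorP Hq.
set A := head mu q in DA EA CA *; set B := tail mu q in EA CA DB *.
have HpA : dle p (kdeg A) by rewrite DA.
have [/= DA1 EA1 CA1 DA2] := factorP HpA.
set A1 := head A p in DA1 EA1 CA1 *; set A2 := tail A p in EA1 CA1 DA2 *.
have EA2 : ksrc A2 = krng B by rewrite -EA CA1 comp_src.
have E3 : ksrc A1 = krng (kcomp A2 B) by rewrite comp_rng.
have Hmu : mu = kcomp A1 (kcomp A2 B) by rewrite -comp_assoc // -CA1.
have [P1 P2] := factor_comp E3.
by rewrite -Hmu DA1 in P1 P2; rewrite P1 P2.
Qed.
End Factorisation.

Section InfinitePaths.
Variables (k : nat) (L : kgraph k).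
Hypothesis HL : is_kgraph L.
Implicit Types (mu nu lam a b : kpath L) (x y : deg_t k -> deg_t k -> kpath L).
Local Notation d0 := (dzero k).

Lemma head_comp a b p : ksrc a = krng b -> dle p (kdeg a) -> head (kcomp a b) p = head a p.
Proof.
move=> E Hp; have Hab : dle (kdeg a) (kdeg (kcomp a b)) by rewrite comp_deg // dle_addr.
have [<- _ _] := factor_assoc HL Hp Hab.
by have [-> _] := factor_comp HL E.
Qed.

Lemma ip_deg x p q : is_ipath x -> dle p q -> kdeg (x p q) = dsub q p.
Proof. by case=> H _; apply: H. Qed.
Lemma ip_comp x p q r : is_ipath x -> dle p q -> dle q r ->
  ksrc (x p q) = krng (x q r) /\ kcomp (x p q) (x q r) = x p r.
Proof. by case=> _ [_ H]; apply: H. Qed.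
Lemma ip_id x p : is_ipath x -> x p p = kid (krng (x p p)).
Proof. by case=> _ [H _]. Qed.

Lemma ip_head x p q : is_ipath x -> dle p q -> x d0 p = head (x d0 q) p.
Proof.
move=> Hx Hpq; have [E C] := ip_comp Hx (dle0 p) Hpq.
by have := factor_comp HL E; rewrite C (ip_deg Hx (dle0 _)) dsub0; case.
Qed.
Lemma ip_tail x p q : is_ipath x -> dle p q -> x p q = tail (x d0 q) p.
Proof.
move=> Hx Hpq; have [E C] := ip_comp Hx (dle0 p) Hpq.
by have := factor_comp HL E; rewrite C (ip_deg Hx (dle0 _)) dsub0; case.
Qed.
Lemma ip_rng x p q : is_ipath x -> dle p q -> krng (x p q) = ksrc (x d0 p).
Proof. by move=> Hx Hpq; have [E _] := ip_comp Hx (dle0 p) Hpq. Qed.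
Lemma ip_rng0 x v q : is_ipath x -> x d0 d0 = kid v -> krng (x d0 q) = v.
Proof.
move=> Hx H0; have [E C] := ip_comp Hx (dle_refl d0) (dle0 q).
by rewrite -C comp_rng // H0 id_rng.
Qed.

Definition ipath_of (Z : deg_t k -> kpath L) := fun p q : deg_t k => tail (Z q) p.

Section Coherent.
Variable Z : deg_t k -> kpath L.
Hypotheses (HZdeg : forall q, kdeg (Z q) = q)
           (HZhead : forall q q', dle q q' -> head (Z q') q = Z q).

Lemma ipath_ofP : is_ipath (ipath_of Z).
Proof.
rewrite /ipath_of; split; [|split].
- move=> p q Hpq; have Hq : dle p (kdeg (Z q)) by rewrite HZdeg.
  by have [_ _ _ ->] := factorP HL Hq; rewrite HZdeg.
- by move=> p; have := head_full HL (Z p); rewrite HZdeg => -[_ ->]; rewrite id_rng.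
- move=> p q r Hpq Hqr; have Hr : dle q (kdeg (Z r)) by rewrite HZdeg.
  have [P1 P2 P3] := factor_assoc HL Hpq Hr.
  by rewrite (HZhead Hqr) in P1 P2 P3; rewrite P3 P2.
Qed.

Lemma ipath_of0 q : ipath_of Z d0 q = Z q.
Proof. by rewrite /ipath_of; case: (factor0 HL (Z q)). Qed.
End Coherent.

Lemma ipath_eqi x x' : is_ipath x -> (forall p q, dle p q -> x' p q = x p q) -> is_ipath x'.
Proof.
move=> Hx E; split; [|split].
- by move=> p q Hpq; rewrite E // (ip_deg Hx Hpq).
- by move=> p; rewrite E ?dle_refl // {1}(ip_id _ Hx).
- move=> p q r Hpq Hqr; rewrite !E //; last exact: dle_trans Hpq Hqr.
  exact: ip_comp Hx Hpq Hqr.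
Qed.

Lemma ip_shift y m : is_ipath y -> is_ipath (fun p q => y (dadd p m) (dadd q m)).
Proof.
move=> Hy; split; [|split].
- by move=> p q Hpq; rewrite (ip_deg Hy (dle_add2r _ Hpq)) dsub_add2r.
- by move=> p; rewrite {1}(ip_id _ Hy).
- by move=> p q r Hpq Hqr; apply: ip_comp Hy (dle_add2r _ Hpq) (dle_add2r _ Hqr).
Qed.

Lemma concat_y0 mu x y : is_concat mu x y -> y d0 d0 = kid (krng mu).
Proof.
by case=> Hy [Hm _]; rewrite (ip_head Hy (dle0 (kdeg mu))) Hm; case: (factor0 HL mu).
Qed.

Lemma concat_head mu x y q : is_concat mu x y -> y d0 (dadd q (kdeg mu)) = kcomp mu (x d0 q).
Proof.
case=> Hy [Hm Hs]; have [E C] := ip_comp Hy (dle0 (kdeg mu)) (dle_addl q (kdeg mu)).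
by rewrite -C Hm; have := Hs d0 q (dle0 q); rewrite dadd0l => ->.
Qed.

Lemma concat_uniq mu x y y' : is_concat mu x y -> is_concat mu x y' ->
  forall p q, dle p q -> y p q = y' p q.
Proof.
move=> H1 H2 p q Hpq; have Hq : dle q (dadd q (kdeg mu)) by exact: dle_addr.
rewrite (ip_tail H1.1 Hpq) (ip_tail H2.1 Hpq) (ip_head H1.1 Hq) (ip_head H2.1 Hq).
by rewrite (concat_head _ H1) (concat_head _ H2).
Qed.

Lemma concat_eqi mu x x' y y' : is_concat mu x y ->
  (forall p q, dle p q -> x' p q = x p q) -> (forall p q, dle p q -> y' p q = y p q) ->
  is_concat mu x' y'.
Proof.
case=> Hy [Hm Hs] Ex Ey; split; [exact: ipath_eqi Hy Ey|split].
- by rewrite Ey ?dle0.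
- by move=> p q Hpq; rewrite Ey ?dle_add2r // Hs // Ex.
Qed.

(* Existence of the concatenation lam x, built from the family lam x(0, q). *)
Lemma concat_ex lam x : is_ipath x -> x d0 d0 = kid (ksrc lam) -> exists y, is_concat lam x y.
Proof.
move=> Hx H0; pose P q := kcomp lam (x d0 q).
have lam_src q : ksrc lam = krng (x d0 q) by rewrite (ip_rng0 q Hx H0).
have DP q : kdeg (P q) = dadd (kdeg lam) q by rewrite comp_deg // (ip_deg Hx (dle0 _)) dsub0.
have Psrc p q : dle p q -> ksrc (P p) = krng (x p q).
  by move=> Hpq; rewrite comp_src // (ip_rng Hx Hpq).
have Psplit p q : dle p q -> P q = kcomp (P p) (x p q).
  by move=> Hpq; have [E C] := ip_comp Hx (dle0 p) Hpq; rewrite comp_assoc // C.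
have HPle q : dle q (kdeg (P q)) by rewrite DP dle_addl.
pose Z q := head (P q) q.
have HZdeg q : kdeg (Z q) = q by have [] := factorP HL (HPle q).
have HZhead q q' : dle q q' -> head (Z q') q = Z q.
  move=> Hqq'; have [-> _ _] := factor_assoc HL Hqq' (HPle q').
  by rewrite (Psplit _ _ Hqq') head_comp //; apply: Psrc.
have ZP q : Z (dadd q (kdeg lam)) = P q.
  rewrite /Z (Psplit q) ?dle_addr // -[in X in head _ X](daddC (kdeg lam)) -DP.
  by case: (factor_comp HL (Psrc _ _ (dle_addr q (kdeg lam)))).
exists (ipath_of Z); split; [exact: ipath_ofP|split].
- by rewrite ipath_of0 -[kdeg lam]dadd0l ZP /P H0 comp_idr.
- move=> p q Hpq; rewrite /ipath_of ZP (Psplit _ _ Hpq) -[dadd p _]daddC -DP.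
  by case: (factor_comp HL (Psrc _ _ Hpq)).
Qed.
End InfinitePaths.

Section ExistenceOfInfinitePaths.
Variables (k : nat) (L : kgraph k).
Hypotheses (HL : is_kgraph L) (HSF : kg_source_free L).
Local Notation d0 := (dzero k).

Lemma chain_ipath (Lam : nat -> kpath L) v :
  (forall j, krng (Lam j) = v) -> (forall j, kdeg (Lam j) = dconst k j) ->
  (forall j j', j <= j' -> head (Lam j') (dconst k j) = Lam j) ->
  exists x, is_ipath x /\ x d0 d0 = kid v.
Proof.
move=> Lrng Ldeg Lhead.
have Lle q j : dle q (dconst k j) -> dle q (kdeg (Lam j)) by rewrite Ldeg.
pose Z q := head (Lam (dsize q)) q.
have HZdeg q : kdeg (Z q) = q by have [] := factorP HL (Lle _ _ (dle_dconst_size q)).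
have HZhead q q' : dle q q' -> head (Z q') q = Z q.
  move=> Hqq'; have Hsz := dsize_le Hqq'.
  have [-> _ _] := factor_assoc HL Hqq' (Lle _ _ (dle_dconst_size q')).
  have [<- _ _] := factor_assoc HL (dle_dconst_size q) (Lle _ _ (dconst_le k Hsz)).
  by rewrite Lhead.
have Z0 : Z d0 = kid v.
  rewrite (deg0_kid HL (HZdeg d0)); congr kid.
  have [_ E C _] := factorP HL (Lle _ _ (dle0 (dconst k (dsize d0)))).
  by rewrite -(Lrng (dsize d0)) [in RHS]C comp_rng.
by exists (ipath_of Z); split; [exact: ipath_ofP | rewrite (ipath_of0 HL)].
Qed.

(* Source-freeness gives such a chain at every vertex: keep appending an
   edge of degree (1, ..., 1). *)
Lemma diag_chain v : exists Lam : nat -> kpath L,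
  [/\ forall j, krng (Lam j) = v, forall j, kdeg (Lam j) = dconst k j &
      forall j j', j <= j' -> head (Lam j') (dconst k j) = Lam j].
Proof.
pose is_step w (mu : kpath L) := krng mu = w /\ kdeg mu = dconst k 1.
pose unit_step w := epsilon (inhabits (kid w)) (is_step w).
have step_spec w : is_step w (unit_step w) by apply: epsilon_spec; apply: HSF.
have step_rng w : krng (unit_step w) = w by case: (step_spec w).
have step_deg w : kdeg (unit_step w) = dconst k 1 by case: (step_spec w).
pose fix Lam j := if j is j'.+1 then kcomp (Lam j') (unit_step (ksrc (Lam j'))) else kid v.
have Lsrc j : ksrc (Lam j) = krng (unit_step (ksrc (Lam j))) by rewrite step_rng.
have Lrng j : krng (Lam j) = v.
  by elim: j => [|j IH] /=; rewrite ?id_rng // comp_rng.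
have Ldeg j : kdeg (Lam j) = dconst k j.
  elim: j => [|j IH] /=; first by rewrite (id_deg HL); deg_ext.
  by rewrite comp_deg // IH step_deg; deg_ext.
exists Lam; split => // j j'; elim: j' => [|j' IH] Hj.
  by move: Hj; rewrite leqn0 => /eqP ->; rewrite -(Ldeg 0); case: (head_full HL (Lam 0)).
case: (ltngtP j j'.+1) Hj => // [Hlt | ->] _; last first.
  by rewrite -Ldeg; case: (head_full HL (Lam j'.+1)).
by rewrite /= head_comp // ?IH // Ldeg dconst_le.
Qed.

Lemma ipath_ex (v : kvert L) :
  exists x : deg_t k -> deg_t k -> kpath L, is_ipath x /\ x d0 d0 = kid v.
Proof. by have [Lam [Lrng Ldeg Lhead]] := diag_chain v; apply: chain_ipath Lhead. Qed.

Lemma ipath_through (lam : kpath L) :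
  exists x : deg_t k -> deg_t k -> kpath L,
    [/\ is_ipath x, x d0 d0 = kid (krng lam) & x d0 (kdeg lam) = lam].
Proof.
have [x' [Hx' H0]] := ipath_ex (ksrc lam).
have [y Hy] := concat_ex HL Hx' H0.
by exists y; split; [exact: Hy.1 | exact: (concat_y0 HL Hy) | exact: Hy.2.1].
Qed.
End ExistenceOfInfinitePaths.

Section Groups.
Variable G : cgroup.
Hypothesis HG : is_group G.
Local Notation gm := (@gmul G).
Local Notation gi := (@ginv G).
Local Notation e := (gone G).
Implicit Types a b : gcar G.

Lemma gA a b c : gm a (gm b c) = gm (gm a b) c. Proof. by case: HG. Qed.
Lemma g1l a : gm e a = a. Proof. by case: HG => _ []. Qed.
Lemma gVl a : gm (gi a) a = e. Proof. by case: HG => _ []. Qed.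
Lemma gVr a : gm a (gi a) = e.
Proof.
rewrite -[gm a (gi a)]g1l -{1}(gVl (gi a)) -gA [gm (gi a) (gm a (gi a))]gA gVl g1l.
by rewrite gVl.
Qed.
Lemma g1r a : gm a e = a. Proof. by rewrite -(gVl a) gA gVr g1l. Qed.
Lemma ginv_uniq a b : gm a b = e -> a = gi b.
Proof. by move=> H; rewrite -(g1r a) -(gVr b) gA H g1l. Qed.
End Groups.

Section SelfSimilar.
Variables (k : nat) (L : kgraph k) (G : cgroup).
Hypotheses (HL : is_kgraph L) (HG : is_group G).
Variables (act : gcar G -> kpath L -> kpath L) (res : gcar G -> kpath L -> gcar G).
Hypothesis HSS : is_selfsimilar act res.
Local Notation gm := (@gmul G).
Local Notation gi := (@ginv G).
Local Notation e := (gone G).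
Local Notation va := (vact act).
Local Notation ia := (iact act res).
Local Notation d0 := (dzero k).
Implicit Types (g h : gcar G) (mu nu lam beta : kpath L) (x y : deg_t k -> deg_t k -> kpath L).

Lemma act1 mu : act e mu = mu. Proof. by case: HSS. Qed.
Lemma actM g h mu : act (gm g h) mu = act g (act h mu). Proof. by case: HSS => _ []. Qed.
Lemma act_deg g mu : kdeg (act g mu) = kdeg mu.
Proof. by case: HSS => _ [_ [H _]]; case: (H g mu). Qed.
Lemma act_rng g mu : krng (act g mu) = va g (krng mu).
Proof. by case: HSS => _ [_ [H _]]; case: (H g mu) => _ []. Qed.
Lemma act_src g mu : ksrc (act g mu) = va g (ksrc mu).
Proof. by case: HSS => _ [_ [H _]]; case: (H g mu) => _ []. Qed.
Lemma act_comp g mu nu : ksrc mu = krng nu ->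
  act g (kcomp mu nu) = kcomp (act g mu) (act (res g mu) nu).
Proof. by case: HSS => _ [_ [_ [H _]]]; apply: H. Qed.
Lemma res_id g v : res g (kid v) = g. Proof. by case: HSS => _ [_ [_ [_ [H _]]]]. Qed.
Lemma res_comp g mu nu : ksrc mu = krng nu -> res g (kcomp mu nu) = res (res g mu) nu.
Proof. by case: HSS => _ [_ [_ [_ [_ [H _]]]]]; apply: H. Qed.
Lemma res1 mu : res e mu = e. Proof. by case: HSS => _ [_ [_ [_ [_ [_ [H _]]]]]]. Qed.
Lemma resM g h mu : res (gm g h) mu = gm (res g (act h mu)) (res h mu).
Proof. by case: HSS => _ [_ [_ [_ [_ [_ [_ H]]]]]]. Qed.

Lemma act_kid g v : act g (kid v) = kid (va g v).
Proof. by rewrite (deg0_kid HL (_ : kdeg (act g (kid v)) = d0)) // act_deg (id_deg HL). Qed.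

Lemma va1 v : va e v = v. Proof. by rewrite /vact act1 (id_rng HL). Qed.
Lemma vaM g h v : va (gm g h) v = va g (va h v). Proof. by rewrite /vact actM act_rng. Qed.
Lemma vaK g v : va (gi g) (va g v) = v. Proof. by rewrite -vaM gVl // va1. Qed.
Lemma vaKV g v : va g (va (gi g) v) = v. Proof. by rewrite -vaM gVr // va1. Qed.
Lemma va_inj g u w : va g u = va g w -> u = w.
Proof. by move=> H; rewrite -(vaK g u) H vaK. Qed.
Lemma actKV g mu : act g (act (gi g) mu) = mu. Proof. by rewrite -actM gVr // act1. Qed.

Lemma iact_mul g h x v : x d0 d0 = kid v ->
  forall p q, ia (gm g h) x p q = ia g (ia h x) p q.
Proof. by move=> H0 p q; rewrite /iact H0 res_id resM actM. Qed.
Lemma iact_one x p q : ia e x p q = x p q. Proof. by rewrite /iact res1 act1. Qed.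
Lemma iact_inv g x v : x d0 d0 = kid v -> forall p q, ia g (ia (gi g) x) p q = x p q.
Proof. by move=> H0 p q; rewrite -(iact_mul g (gi g) H0) gVr // iact_one. Qed.
Lemma iact00 g x v : x d0 d0 = kid v -> ia g x d0 d0 = kid (va g v).
Proof. by move=> H0; rewrite /iact H0 res_id act_kid. Qed.

(* This is exactly what makes
   h . x an infinite path for every x in v Lambda^infty. *)
Definition coherent h v := forall lam beta, krng lam = v -> ksrc lam = krng beta ->
  va (res h lam) (ksrc beta) = va (res h (kcomp lam beta)) (ksrc beta).

Lemma coherent_iact h v x : coherent h v -> is_ipath x -> x d0 d0 = kid v ->
  is_ipath (ia h x).
Proof.
move=> Hh Hx H0; rewrite /iact; split; [|split].
- by move=> p q Hpq; rewrite act_deg (ip_deg Hx Hpq).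
- move=> p; apply: (deg0_kid HL).
  by rewrite act_deg (ip_deg Hx (dle_refl p)); deg_ext.
- move=> p q r Hpq Hqr.
  have [E1 C1] := ip_comp Hx (dle0 p) Hpq.
  have [E2 C2] := ip_comp Hx Hpq Hqr.
  have Hr : krng (x d0 p) = v by exact: (ip_rng0 HL p Hx H0).
  rewrite -C1 (res_comp _ E1); split.
  + by rewrite act_src act_rng -E2 -(res_comp _ E1); apply: Hh.
  + by rewrite -act_comp // C2.
Qed.

(* Taking lam to be a vertex: h and h|_lam agree on s(lam). *)
Lemma coherent_src h v lam : coherent h v -> krng lam = v ->
  va h (ksrc lam) = va (res h lam) (ksrc lam).
Proof.
move=> Hh Hr; have := Hh (kid v) lam.
by rewrite (id_rng HL) (id_src HL) Hr res_id -Hr (comp_idl HL) => ->.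
Qed.

Lemma coherent_inv_src g v lam : coherent g v -> krng lam = va g v ->
  va (gi g) (ksrc lam) = va (res (gi g) lam) (ksrc lam).
Proof.
move=> Hg Hr; set lam' := act (gi g) lam.
have Hr' : krng lam' = v by rewrite /lam' act_rng Hr vaK.
have Hsrc := coherent_src Hg Hr'.
rewrite /lam' act_src -vaM gVr // va1 in Hsrc.
have Hres : gm (res g lam') (res (gi g) lam) = e by rewrite -resM gVr // res1.
by apply: (@va_inj (res g lam')); rewrite -Hsrc -vaM Hres va1.
Qed.

Lemma coherent_inv g v : coherent g v -> coherent (gi g) (va g v).
Proof.
move=> Hg lam beta Hr Ec; set h := gi g; set r := res h lam.
set lam' := act h lam; set beta' := act r beta.
have Elb : ksrc lam' = krng beta' by rewrite act_src act_rng -Ec (coherent_inv_src Hg Hr).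
have Hr' : krng lam' = v by rewrite act_rng Hr vaK.
have Hcoh := Hg lam' beta' Hr' Elb.
have E2 : kcomp lam' beta' = act h (kcomp lam beta) by rewrite act_comp.
have Hk1 : gm (res g lam') r = e by rewrite -resM gVr // res1.
have Hk2 : gm (res g (kcomp lam' beta')) (res h (kcomp lam beta)) = e.
  by rewrite E2 -resM gVr // res1.
rewrite act_src -vaM Hk1 va1 (ginv_uniq HG Hk2) in Hcoh.
by rewrite [in RHS]Hcoh vaKV.
Qed.

Hypothesis HSF : kg_source_free L.
Local Notation cyc := (cycline act res).

(* For a cycline (mu, g, nu), g . x is an infinite path for x in s(nu) Lambda^infty
   (it is a shift of mu (g . x) = nu x), so g is coherent at s(nu). *)
Lemma cycline_iact mu g nu x : cyc mu g nu -> is_ipath x -> x d0 d0 = kid (ksrc nu) ->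
  is_ipath (ia g x).
Proof.
move=> [_ Hc] Hx H0; have [y [[Hy [_ Hs]] _]] := Hc x Hx H0.
by apply: (ipath_eqi (ip_shift (kdeg mu) Hy)) => p q Hpq; rewrite Hs.
Qed.

Lemma cycline_coherent mu g nu : cyc mu g nu -> coherent g (ksrc nu).
Proof.
move=> Hc lam beta Hr Ec; set gam := kcomp lam beta.
have [x [Hx H0 Hgam]] := ipath_through HL HSF gam.
rewrite /gam (comp_rng HL) // Hr in H0.
have Hz := cycline_iact Hc Hx H0.
have Hlq : dle (kdeg lam) (kdeg gam) by rewrite /gam (comp_deg HL) // dle_addr.
have [Xl Xb] := factor_comp HL Ec.
rewrite -/gam -Hgam -(ip_head HL Hx Hlq) -(ip_tail HL Hx Hlq) in Xl Xb.
have [E _] := ip_comp Hz Hlq (dle_refl (kdeg gam)).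
rewrite /iact Xl Xb Hgam act_src act_rng in E.
by rewrite E (ip_rng Hx (dle_refl _)) Hgam /gam (comp_src HL).
Qed.

Lemma cycline_rng mu g nu : cyc mu g nu -> krng mu = krng nu.
Proof.
move=> [_ Hc]; have [x [Hx H0]] := ipath_ex HL HSF (ksrc nu).
have [y [H1 H2]] := Hc x Hx H0.
have := concat_y0 HL H1; rewrite (concat_y0 HL H2) => /(congr1 krng).
by rewrite !(id_rng HL).
Qed.

Lemma cycline_vertex v : cyc (kid v) e (kid v).
Proof.
split; first by rewrite (id_src HL) va1.
move=> x Hx H0; rewrite (id_src HL) in H0; exists x.
split; (split; [exact: Hx | split; [by rewrite (id_deg HL) | move=> p q Hpq]]);
  by rewrite (id_deg HL) !dadd0 ?iact_one.
Qed.

Lemma cycline_inv mu g nu : cyc mu g nu -> cyc nu (gi g) mu.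
Proof.
move=> Hc; have [Hsm Hc'] := Hc.
have Hcoh := coherent_inv (cycline_coherent Hc); rewrite -Hsm in Hcoh.
split; first by rewrite Hsm vaK.
move=> z Hz H0.
have Hw0 := iact00 (gi g) H0; rewrite Hsm vaK in Hw0.
have [y [H1 H2]] := Hc' _ (coherent_iact Hcoh Hz H0) Hw0.
exists y; split => //.
by apply: (concat_eqi H1) => // p q _; rewrite (iact_inv g H0).
Qed.

Lemma cycline_comp mu g nu h eta : cyc mu g nu -> cyc nu h eta -> cyc mu (gm g h) eta.
Proof.
move=> H1 H2; have [S1 C1] := H1; have [S2 C2] := H2.
split; first by rewrite vaM -S2.
move=> x Hx H0; have [y2 [Y2a Y2b]] := C2 x Hx H0.
have Hw0 := iact00 h H0; rewrite -S2 in Hw0.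
have [y1 [Y1a Y1b]] := C1 _ (cycline_iact H2 Hx H0) Hw0.
exists y2; split => //; apply: (concat_eqi Y1a).
- by move=> p q _; rewrite (iact_mul g h H0).
- by move=> p q Hpq; rewrite (concat_uniq HL Y1b Y2a).
Qed.

(* (al mu, g, al nu) is cycline: prepend al to the common infinite path. *)
Lemma cycline_prefix mu g nu al : cyc mu g nu -> ksrc al = krng nu ->
  cyc (kcomp al mu) g (kcomp al nu).
Proof.
move=> Hc Ea; have [Sm Cc] := Hc.
have Ea' : ksrc al = krng mu by rewrite (cycline_rng Hc).
split; first by rewrite !(comp_src HL).
rewrite (comp_src HL) // => x Hx H0.
have [y [Ym Yn]] := Cc x Hx H0.
have Hy0 : y d0 d0 = kid (ksrc al) by rewrite (concat_y0 HL Yn) Ea.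
have [y' Hy'] := concat_ex HL Ym.1 Hy0.
have prefix_concat m z : ksrc al = krng m -> is_concat m z y -> is_concat (kcomp al m) z y'.
  move=> Em Hm; split; first exact: Hy'.1.
  rewrite (comp_deg HL) //; split; first by rewrite daddC (concat_head _ Hy') Hm.2.1.
  move=> p q Hpq; rewrite !dadd_shift.
  by have [_ [_ ->]] := Hy'; [have [_ [_ ->]] := Hm | apply: dle_add2r].
by exists y'; split; apply: prefix_concat.
Qed.

(* (mu (g.lam), g|_lam, nu lam) is cycline: feed lam x into (mu, g, nu). *)
Lemma cycline_extend mu g nu lam : cyc mu g nu -> krng lam = ksrc nu ->
  cyc (kcomp mu (act g lam)) (res g lam) (kcomp nu lam).
Proof.
move=> Hc Er; have [Sm Cc] := Hc.
have Em : ksrc mu = krng (act g lam) by rewrite act_rng Er.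
have En : ksrc nu = krng lam by [].
split; first by rewrite !(comp_src HL) // act_src (coherent_src (cycline_coherent Hc) Er).
rewrite (comp_src HL) // => x Hx H0.
have [y' Hy'] := concat_ex HL Hx H0.
have Hy'0 : y' d0 d0 = kid (ksrc nu) by rewrite (concat_y0 HL Hy') Er.
have [y [Ym Yn]] := Cc y' Hy'.1 Hy'0.
have Hres p : res g (y' d0 (dadd p (kdeg lam))) = res (res g lam) (x d0 p).
  by rewrite (concat_head _ Hy') res_comp // (ip_rng0 HL p Hx H0).
exists y; split; split; try exact: Ym.1; split.
- rewrite (comp_deg HL) // act_deg daddC (concat_head _ Ym).
  by rewrite /iact Hy'0 res_id Hy'.2.1.
- move=> p q Hpq; rewrite (comp_deg HL) // act_deg !dadd_shift.
  have [_ [_ ->]] := Ym; last by apply: dle_add2r.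
  by rewrite /iact Hres; have [_ [_ ->]] := Hy'.
- by rewrite (comp_deg HL) // daddC (concat_head _ Yn) Hy'.2.1.
- move=> p q Hpq; rewrite (comp_deg HL) // !dadd_shift.
  have [_ [_ ->]] := Yn; last by apply: dle_add2r.
  by have [_ [_ ->]] := Hy'.
Qed.
End SelfSimilar.

Section PeriodGroup.
Variables (k : nat) (L : kgraph k) (G : cgroup).
Hypotheses (HL : is_kgraph L) (HG : is_group G).
Variables (act : gcar G -> kpath L -> kpath L) (res : gcar G -> kpath L -> gcar G).
Hypotheses (HSS : is_selfsimilar act res) (HSF : kg_source_free L)
           (HSC : kg_strongly_connected L).
Local Notation cyc := (cycline act res).

Definition ddiff (mu nu : kpath L) : zdeg_t k := [ffun i => ((kdeg mu i)%:Z - (kdeg nu i)%:Z)%R].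

(* Given cycline (mu1, g1, nu1) and (mu2, g2, nu2), join s(nu1) to r(nu2) by a
   path al and set lam = al nu2.  Then
     (mu1 (g1.lam), g1|_lam, nu1 al nu2)   [extension]  and
     (nu1 al nu2, g2^-1, nu1 al mu2)        [inverse, prefixed by nu1 al]
   compose to a cycline triple with degree difference
   (d mu1 - d nu1) - (d mu2 - d nu2). *)
Lemma cycline_sub mu1 g1 nu1 mu2 g2 nu2 : cyc mu1 g1 nu1 -> cyc mu2 g2 nu2 ->
  exists mu g nu, cyc mu g nu /\ ddiff mu nu = zsub (ddiff mu1 nu1) (ddiff mu2 nu2).
Proof.
move=> C1 C2; have [al [Ar As]] := HSC (ksrc nu1) (krng nu2).
set lam := kcomp al nu2; set beta := kcomp nu1 al.
have Elam : krng lam = ksrc nu1 by rewrite (comp_rng HL).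
have Eb : ksrc beta = krng mu2 by rewrite (comp_src HL) // As (cycline_rng HL HSF C2).
have Em : ksrc mu1 = krng (act g1 lam) by rewrite (act_rng HSS) Elam; case: C1.
have C1' := cycline_extend HL HSS HSF C1 Elam.
have Hassoc : kcomp nu1 lam = kcomp beta nu2 by rewrite (comp_assoc HL).
rewrite Hassoc in C1'.
have C2' := cycline_prefix HL HSF (cycline_inv HL HG HSS HSF C2) Eb.
exists (kcomp mu1 (act g1 lam)), (gmul (res g1 lam) (ginv g2)), (kcomp beta mu2).
split; first exact: (cycline_comp HL HSS C1' C2').
rewrite /ddiff (comp_deg HL Em) (comp_deg HL Eb) (act_deg HSS) /lam /beta.
rewrite (comp_deg HL As) (comp_deg HL (esym Ar)).
apply/ffunP => i; rewrite !ffunE.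
move: (kdeg mu1 i) (kdeg nu1 i) (kdeg mu2 i) (kdeg nu2 i) (kdeg al i) => m1 n1 m2 n2 a1.
by rewrite !PoszD; lia.
Qed.

Lemma Per_zero (v : kvert L) : in_Per act res (zzero k).
Proof.
exists (kid v), (gone G), (kid v); split; first exact: (cycline_vertex HL HSS v).
by apply/ffunP => i; rewrite !ffunE subrr.
Qed.

Lemma Per_sub a b : in_Per act res a -> in_Per act res b -> in_Per act res (zsub a b).
Proof.
move=> [mu1 [g1 [nu1 [C1 ->]]]] [mu2 [g2 [nu2 [C2 ->]]]].
have [mu [g [nu [C Hd]]]] := cycline_sub C1 C2.
by exists mu, g, nu; split; last rewrite -Hd.
Qed.
End PeriodGroup.

Lemma sum_bij (R : nmodType) (I J : eqType) (s : seq I) (t : seq J) (f : I -> J) (F : J -> R) :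
  uniq s -> uniq t -> {in s &, injective f} ->
  (forall j, reflect (exists2 i, i \in s & j = f i) (j \in t)) ->
  (\sum_(j <- t) F j = \sum_(i <- s) F (f i))%R.
Proof.
move=> Us Ut Hinj Ht; rewrite (perm_big [seq f i | i <- s]) ?big_map //.
apply: uniq_perm; rewrite ?map_inj_in_uniq // => j.
by apply/Ht/mapP.
Qed.

Lemma sum_fibres (R : nmodType) (I J : eqType) (s : seq I) (t : seq J) (f : I -> J) (F : I -> R) :
  uniq t -> (forall i, i \in s -> f i \in t) ->
  (\sum_(i <- s) F i = \sum_(j <- t) \sum_(i <- s | f i == j) F i)%R.
Proof.
move=> Ut Hf; rewrite (exchange_big_dep predT) //=; apply: eq_big_seq => i Hi.
by rewrite -big_filter (@eq_filter _ _ (pred1 (f i))) ?filter_pred1_uniq ?big_seq1 ?Hf.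
Qed.

Lemma sum_gt0_mem (R : numDomainType) (I : eqType) (s : seq I) (F : I -> R) a :
  a \in s -> (forall b, 0 < F b)%R -> (0 < \sum_(b <- s) F b)%R.
Proof.
move=> Ha HF; elim: s Ha => [//|c s IH]; rewrite inE big_cons => /orP [/eqP <- | Hs].
- by apply: ltr_wpDr => //; apply: sumr_ge0 => b _; apply: ltW.
- by apply: ltr_wpDl; [apply: ltW | apply: IH].
Qed.

Section Weights.
Variables (k : nat) (L : kgraph k).
Hypotheses (HL : is_kgraph L) (HF : kg_finite L).
Variables (T : 'I_k -> kvert L -> kvert L -> nat) (rho : 'I_k -> algC) (xv : kvert L -> algC).
Hypotheses (HT : adj_count T) (HPF : is_PF T rho xv).
Implicit Types (mu nu lam al beta : kpath L) (a b : deg_t k).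
Local Notation d0 := (dzero k).

Definition paths_of_deg a : seq (kpath L) :=
  epsilon (inhabits [::]) (fun s => forall mu, kdeg mu = a -> mu \in s).
Definition paths_of (v : kvert L) a :=
  undup [seq mu <- paths_of_deg a | (krng mu == v) && (kdeg mu == a)].

Lemma mem_paths_of v a mu : (mu \in paths_of v a) = (krng mu == v) && (kdeg mu == a).
Proof.
rewrite mem_undup mem_filter andb_idr // => /andP [_ /eqP Hd].
by apply: (epsilon_spec (inhabits [::]) (fun s => forall mu, kdeg mu = a -> mu \in s)).
Qed.
Lemma uniq_paths_of v a : uniq (paths_of v a). Proof. exact: undup_uniq. Qed.

Definition weight v a := (\sum_(mu <- paths_of v a) xv (ksrc mu))%R.

Definition rho_natpow a := (\prod_(i < k) rho i ^+ a i)%R.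

Lemma rho_natpowD a b : rho_natpow (dadd a b) = (rho_natpow a * rho_natpow b)%R.
Proof. by rewrite /rho_natpow -big_split; apply: eq_bigr => j _; rewrite ffunE exprD. Qed.
Lemma rho_natpow_basis i : rho_natpow (dbasis i) = rho i.
Proof.
rewrite /rho_natpow (bigD1 i) //= ffunE eqxx expr1 big1 ?mulr1 // => j Hj.
by rewrite ffunE (negbTE Hj) expr0.
Qed.
Lemma rho_natpow0 : rho_natpow d0 = 1%R.
Proof. by rewrite /rho_natpow big1 // => j _; rewrite ffunE expr0. Qed.

Lemma weight_basis i v : weight v (dbasis i) = (rho i * xv v)%R.
Proof.
have [_ [_ Heig]] := HPF; rewrite -Heig /weight.
rewrite (@sum_fibres _ _ _ _ (enum (kvert L)) ksrc) ?enum_uniq // => [|mu _]; last by rewrite mem_enum.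
rewrite big_enum /=; apply: eq_bigr => w _.
rewrite (eq_bigr (fun _ => xv w)) => [|mu /eqP -> //].
rewrite -big_filter big_const_seq iter_addr_0 mulr_natl; congr (_ *+ _)%R.
have [s [Us [Ss Ms]]] := HT i v w; rewrite count_predT -Ss; apply: perm_size.
apply: uniq_perm; rewrite ?filter_uniq ?uniq_paths_of // => mu.
by rewrite mem_filter mem_paths_of Ms; do ! case: eqP.
Qed.

Lemma weight0 v : weight v d0 = xv v.
Proof.
rewrite /weight (perm_big [:: kid v]) ?big_seq1 ?(id_src HL) //.
apply: uniq_perm; rewrite ?uniq_paths_of // => mu; rewrite mem_paths_of inE.
apply/idP/eqP => [/andP [/eqP Hr /eqP Hd] | ->].
- by rewrite (deg0_kid HL Hd) Hr.
- by rewrite (id_rng HL) (id_deg HL) !eqxx.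
Qed.

Lemma weight_add v a b :
  weight v (dadd a b) = (\sum_(lam <- paths_of v a) weight (ksrc lam) b)%R.
Proof.
have Hhead mu : mu \in paths_of v (dadd a b) -> head mu a \in paths_of v a.
  rewrite !mem_paths_of => /andP [/eqP Hr /eqP Hd].
  have Hle : dle a (kdeg mu) by rewrite Hd dle_addr.
  have [/= D1 E1 C1 _] := factorP HL Hle.
  by rewrite D1 eqxx andbT -Hr; apply/eqP; rewrite [in RHS]C1 (comp_rng HL).
rewrite /weight (@sum_fibres _ _ _ _ _ _ (fun mu => xv (ksrc mu)) (uniq_paths_of v a) Hhead).
apply: eq_big_seq => lam; rewrite mem_paths_of => /andP [/eqP Hr /eqP Hd].
rewrite -big_filter (@sum_bij _ _ _ (paths_of (ksrc lam) b) _ (kcomp lam)) ?filter_uniq ?uniq_paths_of //.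
- apply: eq_big_seq => nu; rewrite mem_paths_of => /andP [/eqP Hnr _].
  by rewrite (comp_src HL).
- move=> nu nu'; rewrite !mem_paths_of => /andP [/eqP Hn _] /andP [/eqP Hn' _] Heq.
  have [_ P1] := factor_comp HL (esym Hn); have [_ P2] := factor_comp HL (esym Hn').
  by rewrite -P1 -P2 Heq.
move=> mu; rewrite mem_filter mem_paths_of; apply: (iffP idP).
- move=> /andP [/eqP Hp /andP [/eqP Hmr /eqP Hmd]].
  have Hle : dle a (kdeg mu) by rewrite Hmd dle_addr.
  have [/= D1 E1 C1 D2] := factorP HL Hle.
  exists (tail mu a); last by rewrite -Hp.
  by rewrite mem_paths_of -E1 Hp eqxx D2 Hmd dsubK eqxx.
- case=> nu; rewrite mem_paths_of => /andP [/eqP Hnr /eqP Hnd] ->.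
  have [P1 _] := factor_comp HL (esym Hnr).
  by rewrite -Hd P1 eqxx (comp_rng HL) // Hr (comp_deg HL) // Hd Hnd !eqxx.
Qed.

Lemma weight_pow v a : weight v a = (rho_natpow a * xv v)%R.
Proof.
have [n Hn] : exists n, dsize a = n by exists (dsize a).
elim: n a v Hn => [|n IH] a v Hn.
  by rewrite (dsize0 Hn) weight0 rho_natpow0 mul1r.
have [i [a' Ea]] : exists i a', a = dadd a' (dbasis i) by apply: dpeel; rewrite Hn.
have Ha' : dsize a' = n by move: Hn; rewrite Ea dsize_add dsize_basis addn1 => -[].
rewrite Ea weight_add; under eq_big_seq => lam _ do rewrite weight_basis.
by rewrite -big_distrr /= -/(weight v a') IH // rho_natpowD rho_natpow_basis mulrA (mulrC (rho i)).
Qed.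

(* The spectral radii are nonzero: v Lambda^{e_i} is nonempty and x > 0. *)
Hypothesis HSF : kg_source_free L.

Lemma rho_neq0 (v : kvert L) i : (rho i != 0)%R.
Proof.
have [mu0 [Hr Hd]] := HSF v (dbasis i).
have Hin : mu0 \in paths_of v (dbasis i) by rewrite mem_paths_of Hr Hd !eqxx.
have : (0 < weight v (dbasis i))%R by apply: (sum_gt0_mem Hin) => b; case: HPF.
by rewrite weight_basis; apply: contraTneq => ->; rewrite mul0r ltxx.
Qed.

Lemma rho_natpow_neq0 (v : kvert L) a : (rho_natpow a != 0)%R.
Proof. by apply/prodf_neq0 => i _; rewrite expf_neq0 // (rho_neq0 v). Qed.

Lemma rho_pow_diff (v : kvert L) a b :
  rho_pow rho [ffun i => ((a i)%:Z - (b i)%:Z)%R] = (rho_natpow a / rho_natpow b)%R.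
Proof.
rewrite /rho_pow /rho_natpow -prodfV -big_split /=; apply: eq_bigr => i _.
by rewrite ffunE expfzDr ?(rho_neq0 v) // -invr_expz.
Qed.
End Weights.

Section CyclineWeights.
Variables (k : nat) (L : kgraph k) (G : cgroup).
Hypotheses (HL : is_kgraph L) (HG : is_group G) (HSF : kg_source_free L) (HF : kg_finite L).
Variables (act : gcar G -> kpath L -> kpath L) (res : gcar G -> kpath L -> gcar G).
Hypothesis HSS : is_selfsimilar act res.
Local Notation cyc := (cycline act res).
Local Notation d0 := (dzero k).
Implicit Types (mu nu al beta : kpath L) (g : gcar G).

(* Reading mu (g . x) = nu x at degree d(mu) + d(nu). *)
Lemma cycline_commute mu g nu x : cyc mu g nu -> is_ipath x -> x d0 d0 = kid (ksrc nu) ->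
  kcomp nu (x d0 (kdeg mu)) = kcomp mu (act g (x d0 (kdeg nu))).
Proof.
move=> [_ Hc] Hx H0; have [y [Ym Yn]] := Hc x Hx H0.
by rewrite -(concat_head _ Yn) daddC (concat_head _ Ym) /iact H0 (res_id HSS).
Qed.

Lemma cycline_match_left mu g nu al : cyc mu g nu -> krng al = ksrc nu -> kdeg al = kdeg mu ->
  exists2 beta, beta \in paths_of (ksrc mu) (kdeg nu) & kcomp nu al = kcomp mu beta.
Proof.
move=> Hc Hr Hd; have [x [Hx H0 Hal]] := ipath_through HL HSF al.
rewrite Hr in H0; rewrite Hd in Hal.
exists (act g (x d0 (kdeg nu))); last by rewrite -Hal (cycline_commute Hc Hx H0).
rewrite (mem_paths_of HF) (act_rng HSS) (ip_rng0 HL _ Hx H0) (act_deg HSS) (ip_deg Hx (dle0 _)).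
by case: Hc => -> _; rewrite dsub0 !eqxx.
Qed.

Lemma cycline_match_right mu g nu beta : cyc mu g nu ->
  krng beta = ksrc mu -> kdeg beta = kdeg nu ->
  exists2 al, al \in paths_of (ksrc nu) (kdeg mu) & kcomp nu al = kcomp mu beta.
Proof.
move=> Hc Hr Hd; set gam := act (ginv g) beta.
have Hgr : krng gam = ksrc nu by rewrite (act_rng HSS) Hr; case: Hc => -> _; rewrite (vaK HL HG HSS).
have [x [Hx H0 Hgam]] := ipath_through HL HSF gam.
rewrite Hgr in H0; rewrite (act_deg HSS) Hd in Hgam.
exists (x d0 (kdeg mu)).
  by rewrite (mem_paths_of HF) (ip_rng0 HL _ Hx H0) (ip_deg Hx (dle0 _)) dsub0 !eqxx.
by rewrite (cycline_commute Hc Hx H0) Hgam (actKV HG HSS).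
Qed.

(* The matching al |-> beta is a bijection, so W(s nu, d mu) = W(s mu, d nu). *)
Lemma weight_cycline (xv : kvert L -> algC) mu g nu : cyc mu g nu ->
  weight xv (ksrc nu) (kdeg mu) = weight xv (ksrc mu) (kdeg nu).
Proof.
move=> Hc; pose f al := tail (kcomp nu al) (kdeg mu).
have f_spec al : al \in paths_of (ksrc nu) (kdeg mu) ->
    f al \in paths_of (ksrc mu) (kdeg nu) /\ kcomp nu al = kcomp mu (f al).
  rewrite (mem_paths_of HF) => /andP [/eqP Hr /eqP Hd].
  have [beta Hbeta Heq] := cycline_match_left Hc Hr Hd.
  have /andP [/eqP Hbr _] : (krng beta == ksrc mu) && (kdeg beta == kdeg nu).
    by rewrite -(mem_paths_of HF).
  have [_ Ef] := factor_comp HL (esym Hbr).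
  by rewrite /f Heq Ef; split.
rewrite /weight [RHS](@sum_bij _ _ _ (paths_of (ksrc nu) (kdeg mu)) _ f) ?uniq_paths_of //.
- apply: eq_big_seq => al Hal; have [Hf Heq] := f_spec al Hal.
  move: Hal Hf; rewrite !(mem_paths_of HF) => /andP [/eqP Hr _] /andP [/eqP Hfr _].
  by rewrite -(comp_src HL (esym Hfr)) -Heq (comp_src HL (esym Hr)).
- move=> a1 a2 H1 H2 Hf; have [_ K1] := f_spec a1 H1; have [_ K2] := f_spec a2 H2.
  move: H1 H2; rewrite !(mem_paths_of HF) => /andP [/eqP R1 _] /andP [/eqP R2 _].
  have [_ Q1] := factor_comp HL (esym R1); have [_ Q2] := factor_comp HL (esym R2).
  by rewrite -Q1 -Q2 K1 K2 Hf.
move=> beta; apply: (iffP idP).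
- rewrite (mem_paths_of HF) => /andP [/eqP Hbr /eqP Hbd].
  have [al Hal Heq] := cycline_match_right Hc Hbr Hbd.
  by exists al => //; rewrite /f Heq; case: (factor_comp HL (esym Hbr)).
- by case=> al Hal ->; case: (f_spec al Hal).
Qed.
End CyclineWeights.

(* If x is G-invariant then rho^(d mu - d nu) = 1 for every cycline triple:
   W(s nu, d mu) = W(s mu, d nu) reads rho^{d mu} x(s nu) = rho^{d nu} x(g.s nu). *)
Lemma Per_rho (k : nat) (L : kgraph k) (G : cgroup)
  (act : gcar G -> kpath L -> kpath L) (res : gcar G -> kpath L -> gcar G)
  (T : 'I_k -> kvert L -> kvert L -> nat) (rho : 'I_k -> algC) (xv : kvert L -> algC) :
  is_group G -> is_kgraph L -> kg_source_free L -> kg_finite L ->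
  is_selfsimilar act res -> adj_count T -> is_PF T rho xv ->
  (forall g v, xv (vact act g v) = xv v) ->
  forall n, in_Per act res n -> rho_pow rho n = 1%R.
Proof.
move=> HG HL HSF HF HSS HT HPF Hinv n [mu [g [nu [Hc ->]]]].
have HW := weight_cycline HL HG HSF HF HSS xv Hc.
rewrite !(weight_pow HL HF HT HPF) (proj1 Hc) Hinv in HW.
have Hx0 : (xv (ksrc nu) != 0)%R by case: HPF => Hpos _; rewrite gt_eqF.
rewrite (rho_pow_diff HF HT HPF HSF (ksrc nu)) (mulIf Hx0 HW) divff //.
exact: (rho_natpow_neq0 HF HT HPF HSF (ksrc nu)).
Qed.

Theorem corollary6p13 (k : nat) (G : cgroup) (L : kgraph k)
  (act : gcar G -> kpath L -> kpath L) (res : gcar G -> kpath L -> gcar G)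
  (T : 'I_k -> kvert L -> kvert L -> nat) (rho : 'I_k -> algC) (x : kvert L -> algC) :
  (0 < k)%N ->
  is_group G -> folner_amenable G ->
  is_kgraph L -> kg_row_finite L -> kg_source_free L ->
  kg_finite L -> kg_strongly_connected L ->
  is_selfsimilar act res -> pseudo_free act res -> locally_faithful act ->
  finite_state res ->
  adj_count T ->
  (forall i, is_specrad (adjmx (T i)) (rho i)) ->
  is_PF T rho x ->
  (forall g v, x (vact act g v) = x v) ->
  in_Per act res (zzero k) /\
  (forall a b, in_Per act res a -> in_Per act res b -> in_Per act res (zsub a b)) /\
  (forall n, in_Per act res n -> rho_pow rho n = 1%R).
Proof.
move=> _ HG _ HL _ HSF HF HSC HSS _ _ _ HT _ HPF Hinv.
(* The Perron-Frobenius vector sums to 1, so there is a vertex. *)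
have [v _] : exists v : kvert L, true.
  case: (pickP (fun _ : kvert L => true)) => [v _ | Hn]; first by exists v.
  by case: HPF => _ [+ _]; rewrite big_pred0 // => /eqP; rewrite eq_sym oner_eq0.
split; first exact: (Per_zero HL HSS v).
split; first by move=> a b; apply: (Per_sub HL HG HSS HSF HSC).
exact: (Per_rho HG HL HSF HF HSS HT HPF Hinv).
Qed.
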